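(* Let $X$ be the Coxeter realization of a building of triangle type $(2,k,m)$ with $k\ge3$ and $m\ge6$. Let $v,v'$ be two vertices of type $\mathbf{k}$ adjacent to a vertex $w$ of type $\mathbf{2}$. Then $w$ is the unique vertex of type $\mathbf 2$ adjacent to both $v$ and $v'$. Moreover, if $v,v'$ are both adjacent to a vertex $u$ of type $\mathbf m$, then $w$ and $u$ are adjacent.
   Context: Buildings have finite thickness; the Coxeter realization is the simplicial complex whose apartments are Coxeter complexes of the triangle group. A vertex is of type $\mathbf{j}$ ($j\in\{2,k,m\}$) if its stabilizer in an apartment is dihedral of order $2j$, equivalently its link is a bipartite graph of girth $2j$; when $k=m$ the two types $\mathbf k$ and $\mathbf m$ are still distinguished (as the two types of vertices of a chamber other than type $\mathbf 2$). *)

From mathcomp Require Import all_boot.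
From Stdlib Require Import Relations.
From Stdlib Require List.
Set Implicit Arguments. Unset Strict Implicit. Unset Printing Implicit Defensive.

(* Generators s_0, s_1, s_2 of the Coxeter system. *)
Definition word := seq 'I_3.

Definition coxm (k m : nat) (i j : 'I_3) : nat :=
  if i == j then 1
  else if (i != 0 :> nat) && (j != 0 :> nat) then 2
  else if (i == 1 :> nat) || (j == 1 :> nat) then m
  else k.

(* Equality in the Coxeter group W = < S | (s t)^m(s,t) = 1 > :
   the congruence on words generated by deleting a relator
   (s t)^{m(s,t)} (this includes s s for s = t). *)
Inductive weq (k m : nat) : word -> word -> Prop :=
| weq_refl u : weq k m u u
| weq_sym u v : weq k m u v -> weq k m v u
| weq_trans u v w : weq k m u v -> weq k m v w -> weq k m u w
| weq_rel u v (i j : 'I_3) :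
    weq k m (u ++ flatten (nseq (coxm k m i j) [:: i; j]) ++ v) (u ++ v).

Definition coxlen (k m : nat) (w : word) (n : nat) : Prop :=
  (exists w', weq k m w w' /\ size w' = n) /\
  (forall w', weq k m w w' -> n <= size w').

(** * Buildings of type (2,k,m) as W-metric spaces (Abramenko-Brown, Def. 5.1) *)

Definition is_building (k m : nat) (Ch : Type) (delta : Ch -> Ch -> word) : Prop :=
  (forall C D, weq k m (delta C D) [::] <-> C = D) /\
  (forall C D C' (s : 'I_3), weq k m (delta C' C) [:: s] ->
      (weq k m (delta C' D) (s :: delta C D) \/ weq k m (delta C' D) (delta C D)) /\
      ((forall n, coxlen k m (delta C D) n -> coxlen k m (s :: delta C D) n.+1) ->
         weq k m (delta C' D) (s :: delta C D))) /\
  (forall C D (s : 'I_3), exists C',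
      weq k m (delta C' C) [:: s] /\ weq k m (delta C' D) (s :: delta C D)).

Definition sadj (k m : nat) (Ch : Type) (delta : Ch -> Ch -> word)
  (s : 'I_3) (C D : Ch) : Prop := weq k m (delta C D) [:: s].

Definition finite_thickness (k m : nat) (Ch : Type) (delta : Ch -> Ch -> word) : Prop :=
  forall (C : Ch) (s : 'I_3), exists l : list Ch,
    forall D, sadj k m delta s C D -> List.In D l.

(* A vertex of cotype i is a residue of type S \ {i}: the set of chambers
   reachable from a given chamber by a gallery whose steps have types
   different from i.  We represent a vertex by any chamber containing it;
   [samevert i C D] means C and D determine the same cotype-i vertex. *)
Definition samevert (k m : nat) (Ch : Type) (delta : Ch -> Ch -> word)
  (i : 'I_3) : relation Ch :=
  clos_refl_trans Ch (fun C D => exists s : 'I_3, s != i /\ sadj k m delta s C D).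

Definition vadj (k m : nat) (Ch : Type) (delta : Ch -> Ch -> word)
  (i : 'I_3) (C : Ch) (j : 'I_3) (D : Ch) : Prop :=
  i != j /\ exists E : Ch, samevert k m delta i C E /\ samevert k m delta j D E.

(* Vertex types: cotype 0 <-> type 2 (residue of type {s1,s2}, m = 2),
   cotype 1 <-> type k ({s0,s2}), cotype 2 <-> type m ({s0,s1}). *)
Definition type2 : 'I_3 := @Ordinal 3 0 isT.
Definition typek : 'I_3 := @Ordinal 3 1 isT.
Definition typem : 'I_3 := @Ordinal 3 2 isT.

(* Choose chambers A containing v and w and B containing v' and w with
   delta(A, B) = s1; they exist because v <> v' and the residue of w has Weyl
   group <s1, s2>, the Klein four group.  A second such pair C, D for a type-2
   vertex w' gives x = delta(A, C) and y = delta(B, D) in the dihedral group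
   <s0, s2> with s1 x = y s1; a type-m vertex u adjacent to v and v' gives
   instead g x = y s1 with g in <s0, s1>.  Apply these identities to the simple
   root alpha_1 in the Tits reflection representation: <s0, s2> fixes the
   alpha_1-coordinate, <s0, s1> fixes the alpha_2-coordinate, and the
   coordinates of x alpha_1 are explicit in terms of cos (j pi / k).  Comparing
   coordinates forces x in {1, s2}, so that A and C share their type-2 vertex,
   resp. x in <s2> <s0>, so that some chamber contains both w and u. *)

From Stdlib Require Import Reals Lra Relations Classical.
From mathcomp Require Import all_boot zify.

Set Implicit Arguments. Unset Strict Implicit. Unset Printing Implicit Defensive.

(** * Words in the triangle group *)

Lemma flatten_nseqS T n (s : seq T) :
  flatten (nseq n.+1 s) = flatten (nseq n s) ++ s.
Proof. by elim: n => [|n IH] /=; [rewrite cats0 | rewrite -catA -IH]. Qed.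

Lemma size_flatten_nseq T n (s : seq T) : size (flatten (nseq n s)) = n * size s.
Proof. by elim: n => [|n IH] //=; rewrite size_cat IH mulSn. Qed.

Lemma rev_flatten_nseq T n (x y : T) :
  rev (flatten (nseq n [:: x; y])) = flatten (nseq n [:: y; x]).
Proof. by elim: n => [|n IH] //; rewrite flatten_nseqS rev_cat IH. Qed.

Section Words.
Variables k m : nat.
Local Notation weq := (weq k m).

Lemma weq_cat2 u v w z : weq u v -> weq (w ++ u ++ z) (w ++ v ++ z).
Proof.
elim=> {u v} [u|u v _ IH|u v x _ IH1 _ IH2|u v i j].
- exact: weq_refl.
- exact: weq_sym.
- exact: weq_trans IH1 IH2.
- by have := weq_rel k m (w ++ u) (v ++ z) i j; rewrite !catA.
Qed.

Lemma weq_catl w u v : weq u v -> weq (w ++ u) (w ++ v).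
Proof. by move=> /(weq_cat2 w [::]); rewrite !cats0. Qed.

Lemma weq_catr z u v : weq u v -> weq (u ++ z) (v ++ z).
Proof. exact: weq_cat2 [::] z. Qed.

Lemma weq_cons s u v : weq u v -> weq (s :: u) (s :: v).
Proof. exact: (weq_catl [:: s]). Qed.

Lemma coxm_diag i : coxm k m i i = 1.
Proof. by rewrite /coxm eqxx. Qed.

Lemma coxmC i j : coxm k m i j = coxm k m j i.
Proof. by rewrite /coxm eq_sym; case: (j == i); rewrite // andbC orbC. Qed.

Lemma weq_dup u i v : weq (u ++ [:: i; i] ++ v) (u ++ v).
Proof. by have := weq_rel k m u v i i; rewrite coxm_diag. Qed.

Lemma weq_dup0 i v : weq (i :: i :: v) v.
Proof. exact: weq_dup [::] i v. Qed.

Lemma weq_rev_cat u : weq (rev u ++ u) [::].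
Proof.
elim: u => [|s u IH] /=; first exact: weq_refl.
by rewrite rev_cons cat_rcons; apply: weq_trans IH; apply: weq_dup.
Qed.

Lemma weq_cat_rev u : weq (u ++ rev u) [::].
Proof. by have := weq_rev_cat (rev u); rewrite revK. Qed.

Lemma weq_rev u v : weq u v -> weq (rev u) (rev v).
Proof.
elim=> {u v} [u|u v _ IH|u v x _ IH1 _ IH2|u v i j].
- exact: weq_refl.
- exact: weq_sym.
- exact: weq_trans IH1 IH2.
- rewrite !rev_cat rev_flatten_nseq coxmC.
  by have := weq_rel k m (rev v) (rev u) j i; rewrite catA.
Qed.

Lemma weq_odd_size u v : weq u v -> odd (size u) = odd (size v).
Proof.
elim=> {u v} [u|u v _ IH|u v x _ IH1 _ IH2|u v i j] //; first by rewrite IH1 IH2.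
by rewrite !size_cat size_flatten_nseq /= !oddD oddM andbF.
Qed.

Lemma weq_gen_nil s : ~ weq [:: s] [::].
Proof. by move/weq_odd_size. Qed.

Lemma weq_cancel_nil u v v' : weq (u ++ v) [::] -> weq (u ++ v') [::] -> weq v v'.
Proof.
move=> e e'.
apply: (@weq_trans _ _ _ ((rev u ++ u) ++ v)).
  exact: weq_sym (weq_catr v (weq_rev_cat u)).
rewrite -catA; apply: weq_trans (weq_catl _ e) _.
apply: weq_trans (weq_catl _ (weq_sym e')) _.
by rewrite catA; exact: (weq_catr v' (weq_rev_cat u)).
Qed.

End Words.

Notation s0 := type2.
Notation s1 := typek.
Notation s2 := typem.

Lemma neq_s1 (i : 'I_3) : i != s1 -> i = s0 \/ i = s2.
Proof. by case: i => [[|[|[|]]] ?] //= _; [left | right]; apply/val_inj. Qed.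

Lemma neq_s0 (i : 'I_3) : i != s0 -> i = s1 \/ i = s2.
Proof. by case: i => [[|[|[|]]] ?] //= _; [left | right]; apply/val_inj. Qed.

Definition alt_letter (t : nat) : 'I_3 := if odd t then s2 else s0.

Fixpoint alt_word (t : nat) : word :=
  if t is t'.+1 then alt_letter t' :: alt_word t' else [::].

Section ParabolicNormalForms.
Variables k m : nat.
Hypothesis k_gt0 : 0 < k.
Local Notation weq := (weq k m).

Lemma alt_word_double j : alt_word j.*2 = flatten (nseq j [:: s2; s0]).
Proof. by elim: j => [|j IH] //; rewrite doubleS /= /alt_letter /= odd_double IH. Qed.

Lemma alt_word_order : weq (alt_word k.*2) [::].
Proof. by rewrite alt_word_double; have := weq_rel k m [::] [::] s2 s0; rewrite cats0. Qed.

Lemma alt_word_pred : weq (alt_word k.*2.-1) [:: s2].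
Proof.
have e : alt_word k.*2 = s2 :: alt_word k.*2.-1.
  by case: k k_gt0 => // k' _; rewrite doubleS /= /alt_letter /= odd_double.
have := alt_word_order; rewrite e => /(weq_cons s2).
exact: weq_trans (weq_sym (weq_dup0 k m s2 _)).
Qed.

Lemma alt_word_pred2 : weq (alt_word k.*2.-2) [:: s0; s2].
Proof.
have e : alt_word k.*2 = [:: s2; s0] ++ alt_word k.*2.-2.
  by case: k k_gt0 => // k' _; rewrite doubleS /= /alt_letter /= odd_double.
have := alt_word_order; rewrite e => /weq_cancel_nil; apply.
exact: weq_cat_rev k m [:: s2; s0].
Qed.

Lemma alt_word_cons i t : i != s1 -> t < k.*2 ->
  exists2 t', t' < k.*2 & weq (i :: alt_word t) (alt_word t').
Proof.
move=> i_s1 t_lt.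
have i_cases := neq_s1 i_s1.
have [->|i_alt] := eqVneq i (alt_letter t).
  change (alt_letter t :: alt_word t) with (alt_word t.+1).
  have [t1_lt|t1_ge] := ltnP t.+1 k.*2; first by exists t.+1 => //; exact: weq_refl.
  have -> : t.+1 = k.*2 by apply/eqP; rewrite eqn_leq t1_ge t_lt.
  by exists 0; [rewrite double_gt0 | exact: alt_word_order].
case: t t_lt i_alt => [|t] t_lt i_alt.
  exists k.*2.-1; first by rewrite prednK ?double_gt0.
  have -> : i = s2 by case: i_cases i_alt => // ->.
  exact: weq_sym alt_word_pred.
exists t; first exact: ltnW.
have -> : i = alt_letter t.
  by move: i_alt; rewrite /alt_letter /=; case: (odd t); case: i_cases => ->.
exact: weq_dup0.
Qed.

Lemma alt_word_normal f : all (predC1 s1) f ->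
  exists2 t, t < k.*2 & weq f (alt_word t).
Proof.
elim: f => [|i f IH] /=.
  by exists 0; [rewrite double_gt0 | exact: weq_refl].
case/andP=> i_s1 /IH [t t_lt e].
have [t' t'_lt e'] := alt_word_cons i_s1 t_lt.
by exists t' => //; exact: weq_trans (weq_cons i e) e'.
Qed.

End ParabolicNormalForms.

Section KleinNormalForm.
Variables k m : nat.
Local Notation weq := (weq k m).

Lemma weq_s2s1 : weq [:: s2; s1] [:: s1; s2].
Proof.
apply: (weq_cancel_nil (u := [:: s1; s2])); first exact: weq_cat_rev.
by have := weq_rel k m [::] [::] s1 s2.
Qed.

Lemma klein_normal f : all (predC1 s0) f ->
  [\/ weq f [::], weq f [:: s1], weq f [:: s2] | weq f [:: s1; s2]].
Proof.
elim: f => [|i f IH] /=; first by constructor; exact: weq_refl.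
case/andP=> i_s0 /IH f_nf.
have [->|->] := neq_s0 i_s0.
- case: f_nf => /(weq_cons s1) e.
  + by constructor 2.
  + by constructor 1; exact: weq_trans e (weq_dup0 _ _ _ _).
  + by constructor 4.
  + by constructor 3; exact: weq_trans e (weq_dup0 _ _ _ _).
- case: f_nf => /(weq_cons s2) e.
  + by constructor 3.
  + by constructor 4; exact: weq_trans e weq_s2s1.
  + by constructor 1; exact: weq_trans e (weq_dup0 _ _ _ _).
  + constructor 2; apply: weq_trans e _.
    apply: weq_trans (weq_catr [:: s2] weq_s2s1) _.
    exact: (weq_dup k m [:: s1] s2 [::]).
Qed.

End KleinNormalForm.

(** * W-distance and vertices *)

Section WDistance.
Variables (k m : nat) (Ch : Type) (delta : Ch -> Ch -> word).
Hypothesis hB : is_building k m delta.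
Local Notation weq := (weq k m).
Local Notation samevert := (samevert k m delta).

Lemma delta_refl C : weq (delta C C) [::].
Proof. exact: (hB.1 C C).2. Qed.

Lemma delta_eq C D : weq (delta C D) [::] -> C = D.
Proof. exact: (hB.1 C D).1. Qed.

Lemma delta_panel C D C' i : weq (delta C' C) [:: i] ->
  weq (delta C' D) (i :: delta C D) \/ weq (delta C' D) (delta C D).
Proof. by move=> e; case: (hB.2.1 C D C' i e). Qed.

Lemma delta_panel_reduced C D C' i : weq (delta C' C) [:: i] ->
  (forall n, coxlen k m (delta C D) n -> coxlen k m (i :: delta C D) n.+1) ->
  weq (delta C' D) (i :: delta C D).
Proof. by move=> e; case: (hB.2.1 C D C' i e). Qed.

Lemma delta_panel_exists C D i :
  exists C', weq (delta C' C) [:: i] /\ weq (delta C' D) (i :: delta C D).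
Proof. exact: hB.2.2. Qed.

Lemma delta_panel_step C D i f : weq (delta C D) (i :: f) ->
  exists C', weq (delta C' C) [:: i] /\ weq (delta C' D) f.
Proof.
move=> e; have [C' [e1 e2]] := delta_panel_exists C D i.
exists C'; split => //; apply: weq_trans e2 _.
exact: weq_trans (weq_cons i e) (weq_dup0 k m i f).
Qed.

Lemma sadj_sym i C D : sadj k m delta i C D -> sadj k m delta i D C.
Proof.
move=> e; case: (delta_panel C e) => e'.
  have := weq_cons i (weq_trans (weq_sym e') (delta_refl C)).
  exact: weq_trans (weq_sym (weq_dup0 k m i _)).
have DC : D = C by apply: delta_eq; exact: weq_trans (weq_sym e') (delta_refl C).
by subst D; case: (weq_gen_nil (weq_trans (weq_sym e) (delta_refl C))).
Qed.

Lemma samevert_trans i C D E : samevert i C D -> samevert i D E -> samevert i C E.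
Proof. exact: rt_trans. Qed.

Lemma samevert_sym i C D : samevert i C D -> samevert i D C.
Proof.
elim=> [x y [j [ji e]]|x|x y z _ IH1 _ IH2].
- by apply: rt_step; exists j; split => //; exact: sadj_sym.
- exact: rt_refl.
- exact: rt_trans IH2 IH1.
Qed.

Lemma samevert_delta i X Y D : samevert i X Y ->
  exists2 g, all (predC1 i) g & weq (delta X D) (g ++ delta Y D).
Proof.
move/clos_rt_rt1n_iff; elim=> [x|x y z [j [ji e]] _ [g g_i eg]].
  by exists [::] => //; exact: weq_refl.
case: (delta_panel D e) => e'.
  by exists (j :: g); [rewrite /= ji | exact: weq_trans e' (weq_cons j eg)].
by exists g => //; exact: weq_trans e' eg.
Qed.

Lemma samevert_parabolic i X Y : samevert i X Y ->
  exists2 g, all (predC1 i) g & weq (delta X Y) g.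
Proof.
move=> /(samevert_delta Y) [g g_i e]; exists g => //.
by apply: weq_trans e _; have := weq_catl g (delta_refl Y); rewrite cats0.
Qed.

Lemma parabolic_samevert i f C D :
  all (predC1 i) f -> weq (delta C D) f -> samevert i C D.
Proof.
elim: f C => [|j f IH] C /=; first by move=> _ /delta_eq ->; exact: rt_refl.
case/andP=> ji f_i /delta_panel_step [C' [e1 e2]].
apply: rt_trans (IH C' f_i e2).
by apply: rt_step; exists j; split => //; exact: sadj_sym.
Qed.

Lemma parabolic_cat_samevert i j f1 f2 C D :
  all (predC1 i) f1 -> all (predC1 j) f2 -> weq (delta C D) (f1 ++ f2) ->
  exists K, samevert i C K /\ samevert j K D.
Proof.
elim: f1 C => [|l f IH] C /=.
  by move=> _ f2_j e; exists C; split; [exact: rt_refl | exact: parabolic_samevert e].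
case/andP=> li f_i f2_j /delta_panel_step [C' [e1 e2]].
have [K [CK KD]] := IH C' f_i f2_j e2.
exists K; split => //; apply: rt_trans CK.
by apply: rt_step; exists l; split => //; exact: sadj_sym.
Qed.

Definition reduced (f : word) := coxlen k m f (size f).

Lemma coxlen_weq u v n : weq u v -> coxlen k m u n -> coxlen k m v n.
Proof.
move=> e [[w [e1 s1]] h]; split.
  by exists w; split => //; exact: weq_trans (weq_sym e) e1.
by move=> w' e'; apply: h; exact: weq_trans e e'.
Qed.

Lemma coxlen_uniq u n n' : coxlen k m u n -> coxlen k m u n' -> n = n'.
Proof.
move=> [[w [e sw]] h] [[w' [e' sw']] h'].
by apply/eqP; rewrite eqn_leq; have := h w' e'; have := h' w e; rewrite sw sw' => -> ->.
Qed.

Lemma reduced_prefix u v : reduced (u ++ v) -> reduced u.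
Proof.
move=> [_ h]; split; first by exists u; split => //; exact: weq_refl.
by move=> w e; have := h _ (weq_catr v e); rewrite !size_cat leq_add2r.
Qed.

Lemma reduced_rev u : reduced u -> reduced (rev u).
Proof.
move=> [_ h]; split; first by exists (rev u); split => //; exact: weq_refl.
by move=> w /weq_rev; rewrite revK => /h; rewrite !size_rev.
Qed.

Lemma reduced_exists w : exists2 f, weq w f & reduced f.
Proof.
elim: {w}(size w) {-2}w (leqnn (size w)) => [|n IH] w w_n.
  exists w; first exact: weq_refl.
  by split=> [|w' _]; [exists w; split => //; exact: weq_refl | case: w w_n].
case: (classic (reduced w)) => w_red; first by exists w => //; exact: weq_refl.
have [w' e w'_lt] : exists2 w', weq w w' & size w' < size w.
  apply: NNPP => no_shorter; apply: w_red; split.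
    by exists w; split => //; exact: weq_refl.
  by move=> w' e; rewrite leqNgt; apply/negP => lt; apply: no_shorter; exists w'.
have [f e' f_red] := IH w' (leq_trans w'_lt w_n).
by exists f => //; exact: weq_trans e e'.
Qed.

(* (WD2) applies at every step because u ++ v is reduced, so each letter of v
   lengthens delta. *)
Lemma delta_rev_reduced v : forall u C C' D, reduced (u ++ v) ->
  weq (delta C' C) (rev u) -> weq (delta C' D) v -> weq (delta D C) (rev (u ++ v)).
Proof.
elim: v => [|i v IH] u C C' D uv_red e1 e2.
  by move: e2 => /delta_eq <-; rewrite cats0.
have [C'' [e3 e4]] := delta_panel_step e2.
have ui_red : reduced (u ++ [:: i]) by apply: (reduced_prefix (v := v)); rewrite -catA.
have e5 : weq (delta C'' C) (rev (u ++ [:: i])).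
  rewrite cats1 rev_rcons; apply: weq_trans (delta_panel_reduced (D := C) e3 _) _.
    move=> n n_len.
    have u_red : reduced (rev u) by apply: reduced_rev; exact: reduced_prefix ui_red.
    rewrite (coxlen_uniq n_len (coxlen_weq (weq_sym e1) u_red)) size_rev.
    have := reduced_rev ui_red; rewrite /reduced cats1 rev_rcons /= size_rev.
    exact: coxlen_weq (weq_cons i (weq_sym e1)).
  exact: weq_cons.
by have := IH (u ++ [:: i]) C C'' D _ e5 e4; rewrite -catA; apply.
Qed.

Lemma delta_sym C D : weq (delta D C) (rev (delta C D)).
Proof.
have [f e f_red] := reduced_exists (delta C D).
apply: weq_trans (delta_rev_reduced (u := [::]) f_red (delta_refl C) e) _.
exact: weq_rev (weq_sym e).
Qed.

End WDistance.

(** * The Tits reflection representation *)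

Local Open Scope R_scope.

Definition vec := (R * R * R)%type.

Definition vadd (x y : vec) : vec :=
  let '(x0, x1, x2) := x in let '(y0, y1, y2) := y in (x0 + y0, x1 + y1, x2 + y2).

Definition vscal (r : R) (x : vec) : vec :=
  let '(x0, x1, x2) := x in (r * x0, r * x1, r * x2).

Ltac vec_destruct :=
  repeat match goal with
  | |- context [?v] =>
      is_var v; match type of v with
                | vec => destruct v as [[? ?] ?]
                | (R * R * R)%type => destruct v as [[? ?] ?]
                end
  end; rewrite /=.

Ltac vec_ring := vec_destruct; f_equal; [f_equal|]; ring.

Lemma INR_gt0 n : (0 < n)%N -> 0 < INR n.
Proof. by move=> n_gt0; apply: lt_0_INR; apply/ltP. Qed.

Lemma PI_div_gt0 n : (0 < n)%N -> 0 < PI / INR n.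
Proof. by move/INR_gt0; exact: Rdiv_lt_0_compat PI_RGT_0. Qed.

Lemma PI_div_le j n : (0 < j <= n)%N -> PI / INR n <= PI / INR j.
Proof.
case/andP=> j_gt0 j_le; have := INR_gt0 j_gt0; have : INR j <= INR n by apply/le_INR/leP.
move=> jn j_pos; apply: Rmult_le_compat_l; first exact: Rlt_le PI_RGT_0.
by apply: Rinv_le_contravar.
Qed.

Section Reflections.
Variables cm ck : R.

(* With cm = cos (pi / m) and ck = cos (pi / k) this is the Coxeter form
   B (alpha_i, alpha_j) = - cos (pi / m_ij) of the triangle group. *)
Definition bform (u v : vec) : R :=
  let '(u0, u1, u2) := u in let '(v0, v1, v2) := v in
  u0 * v0 + u1 * v1 + u2 * v2 - cm * (u0 * v1 + u1 * v0) - ck * (u0 * v2 + u2 * v0).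

Definition reflection (a v : vec) : vec := vadd v (vscal (-2 * bform a v) a).

Lemma bformC u v : bform u v = bform v u.
Proof. rewrite /bform; vec_destruct; ring. Qed.

Lemma bformDr u v w : bform u (vadd v w) = bform u v + bform u w.
Proof. rewrite /bform; vec_destruct; ring. Qed.

Lemma bformZr u r v : bform u (vscal r v) = r * bform u v.
Proof. rewrite /bform; vec_destruct; ring. Qed.

Lemma reflectionD a v w : reflection a (vadd v w) = vadd (reflection a v) (reflection a w).
Proof. rewrite /reflection bformDr; vec_ring. Qed.

Lemma reflectionZ a r v : reflection a (vscal r v) = vscal r (reflection a v).
Proof. rewrite /reflection bformZr; vec_ring. Qed.

Lemma reflection_orth a v : bform a v = 0 -> reflection a v = v.
Proof. move=> av0; rewrite /reflection av0; vec_ring. Qed.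

Lemma reflectionK a v : bform a a = 1 -> reflection a (reflection a v) = v.
Proof.
move=> aa1; have e : bform a (reflection a v) = - bform a v.
  by rewrite /reflection bformDr bformZr aa1; ring.
rewrite {1}/reflection e /reflection; vec_ring.
Qed.

Section DihedralPair.
Variables (a b : vec) (n : nat).
Hypothesis n_ge2 : (2 <= n)%N.
Hypothesis aa1 : bform a a = 1.
Hypothesis bb1 : bform b b = 1.
Hypothesis ab : bform a b = - cos (PI / INR n).

Let n_pos : (0 < n)%N := ltnW n_ge2.
Let phi := PI / INR n.
Let c := cos phi.
Let s := sin phi.
Let rot (v : vec) : vec := reflection a (reflection b v).

Lemma phi_gt0 : 0 < phi.
Proof. exact: PI_div_gt0 n_pos. Qed.

Lemma phi_lt_PI : phi < PI.
Proof. by have := @PI_div_le 2 n n_ge2; have := PI_RGT_0; rewrite /= -/phi; lra. Qed.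

Lemma s_gt0 : 0 < s.
Proof. exact: sin_gt_0 phi_gt0 phi_lt_PI. Qed.

Lemma one_sub_c2_neq0 : 1 - c * c <> 0.
Proof.
have := sin2_cos2 phi; have := s_gt0; rewrite /Rsqr /c /s => s_pos sc.
nra.
Qed.

Definition comb (l u : R) : vec := vadd (vscal l a) (vscal u b).

Lemma rot_comb l u : rot (comb l u) = comb (2 * c * (2 * c * l - u) - l) (2 * c * l - u).
Proof.
have ba : bform b a = - c by rewrite bformC ab.
have e : reflection b (comb l u) = comb l (2 * c * l - u).
  rewrite /reflection /comb bformDr !bformZr ba bb1; vec_ring.
rewrite /rot e /reflection /comb bformDr !bformZr aa1 ab -/c; vec_ring.
Qed.

Let S (r : R) := sin (r * phi).

Lemma S_rec x y z : y = x + 1 -> z = x - 1 -> S y = 2 * c * S x - S z.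
Proof.
move=> -> ->; rewrite /S /c Rmult_plus_distr_r Rmult_minus_distr_r Rmult_1_l.
by rewrite sin_plus sin_minus; ring.
Qed.

(* rot acts on span(a, b) as a rotation by 2 phi: orbit_a r and orbit_b r are
   rot^r a and rot^r b written in the basis (a, b). *)
Definition orbit_a (r : R) := comb (S (2 * r + 1) / s) (S (2 * r) / s).
Definition orbit_b (r : R) := comb (- S (2 * r) / s) (- S (2 * r - 1) / s).

Lemma rot_orbit_a r : rot (orbit_a r) = orbit_a (r + 1).
Proof.
have := s_gt0; rewrite /orbit_a rot_comb => s_pos.
have e1 : S (2 * (r + 1)) = 2 * c * S (2 * r + 1) - S (2 * r) by apply: S_rec; ring.
have e2 : S (2 * (r + 1) + 1) = 2 * c * S (2 * (r + 1)) - S (2 * r + 1).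
  by apply: S_rec; ring.
by rewrite e2 e1; f_equal; field; lra.
Qed.

Lemma rot_orbit_b r : rot (orbit_b r) = orbit_b (r + 1).
Proof.
have := s_gt0; rewrite /orbit_b rot_comb => s_pos.
have e1 : S (2 * (r + 1) - 1) = 2 * c * S (2 * r) - S (2 * r - 1) by apply: S_rec; ring.
have e2 : S (2 * (r + 1)) = 2 * c * S (2 * r + 1) - S (2 * r) by apply: S_rec; ring.
have e3 : S (2 * r + 1) = 2 * c * S (2 * r) - S (2 * r - 1) by apply: S_rec; ring.
by rewrite e2 e1 e3; f_equal; field; lra.
Qed.

Lemma iter_rot_orbit (orbit : R -> vec) j :
  (forall r, rot (orbit r) = orbit (r + 1)) -> iter j rot (orbit 0) = orbit (INR j).
Proof. by move=> orbitS; elim: j => [|j IH] //; rewrite iterS IH orbitS -S_INR. Qed.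

Lemma S_period x : S (x + 2 * INR n) = S x.
Proof.
have nphi : INR n * phi = PI.
  by have := INR_gt0 n_pos; rewrite /phi => ?; field; lra.
rewrite /S Rmult_plus_distr_r Rmult_assoc nphi sin_plus sin_2PI cos_2PI; ring.
Qed.

Lemma orbit_a_period r : orbit_a (r + INR n) = orbit_a r.
Proof.
rewrite /orbit_a -(S_period (2 * r + 1)) -(S_period (2 * r)).
by congr (comb (S _ / s) (S _ / s)); ring.
Qed.

Lemma orbit_b_period r : orbit_b (r + INR n) = orbit_b r.
Proof.
rewrite /orbit_b -(S_period (2 * r)) -(S_period (2 * r - 1)).
by congr (comb (- S _ / s) (- S _ / s)); ring.
Qed.

Lemma orbit_a0 : orbit_a 0 = a.
Proof.
have := s_gt0; rewrite /orbit_a /comb /S => s_pos.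
rewrite !Rmult_0_r Rmult_0_l Rplus_0_l Rmult_1_l sin_0 -/s.
replace (s / s) with 1 by (field; lra).
replace (0 / s) with 0 by (field; lra); vec_ring.
Qed.

Lemma orbit_b0 : orbit_b 0 = b.
Proof.
have := s_gt0; rewrite /orbit_b /comb /S => s_pos.
rewrite !Rmult_0_r Rmult_0_l Rminus_0_l Ropp_mult_distr_l_reverse Rmult_1_l.
rewrite sin_0 sin_neg -/s.
replace (- - s / s) with 1 by (field; lra).
replace (- 0 / s) with 0 by (field; lra); vec_ring.
Qed.

Lemma iter_rotD j v w : iter j rot (vadd v w) = vadd (iter j rot v) (iter j rot w).
Proof. by elim: j => [|j IH] //; rewrite !iterS IH /rot !reflectionD. Qed.

Lemma iter_rotZ j r v : iter j rot (vscal r v) = vscal r (iter j rot v).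
Proof. by elim: j => [|j IH] //; rewrite !iterS IH /rot !reflectionZ. Qed.

Lemma iter_rot_orth j u : bform a u = 0 -> bform b u = 0 -> iter j rot u = u.
Proof. by move=> au bu; elim: j => [|j IH] //; rewrite iterS IH /rot !reflection_orth. Qed.

(* Split v into its component in span(a, b) and a part orthogonal to a and b;
   rot^n fixes a and b by periodicity, and the orthogonal part pointwise. *)
Lemma reflection_pair_order v : iter n rot v = v.
Proof.
have det := one_sub_c2_neq0.
have ba : bform b a = - c by rewrite bformC ab.
pose l := (bform a v + c * bform b v) / (1 - c * c).
pose u := (bform b v + c * bform a v) / (1 - c * c).
pose w := vadd v (vscal (-1) (comb l u)).
have -> : v = vadd (comb l u) w by rewrite /w /comb; vec_ring.
have aw : bform a w = 0.
  by rewrite /w /comb !(bformDr, bformZr) aa1 ab -/c /l /u; field.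
have bw : bform b w = 0.
  by rewrite /w /comb !(bformDr, bformZr) bb1 ba /l /u; field.
have rot_a : iter n rot a = a.
  have := iter_rot_orbit n rot_orbit_a.
  by rewrite -[INR n]Rplus_0_l orbit_a_period orbit_a0.
have rot_b : iter n rot b = b.
  have := iter_rot_orbit n rot_orbit_b.
  by rewrite -[INR n]Rplus_0_l orbit_b_period orbit_b0.
by rewrite iter_rotD (iter_rot_orth _ aw bw) /comb iter_rotD !iter_rotZ rot_a rot_b.
Qed.

End DihedralPair.
End Reflections.

Section TitsRepresentation.
Variables k m : nat.
Hypotheses (k_ge3 : (3 <= k)%N) (m_ge3 : (3 <= m)%N).

Definition cm := cos (PI / INR m).
Definition ck := cos (PI / INR k).

Definition simple_root (i : 'I_3) : vec :=
  match nat_of_ord i with 0%N => (1, 0, 0) | 1%N => (0, 1, 0) | _ => (0, 0, 1) end.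

Definition coord (i : 'I_3) (v : vec) : R :=
  match nat_of_ord i with 0%N => v.1.1 | 1%N => v.1.2 | _ => v.2 end.

Definition sref (i : 'I_3) (v : vec) : vec := reflection cm ck (simple_root i) v.

Definition act (w : word) (v : vec) : vec := foldr sref v w.

Lemma act_cat u w v : act (u ++ w) v = act u (act w v).
Proof. exact: foldr_cat. Qed.

Lemma act_scal w r v : act w (vscal r v) = vscal r (act w v).
Proof. by elim: w => [|i w IH] //=; rewrite IH /sref reflectionZ. Qed.

Lemma sref_coord i j v : j != i -> coord i (sref j v) = coord i v.
Proof.
rewrite /sref /reflection /simple_root /coord; vec_destruct.
by case: i j => [[|[|[|?]]] ?] [[|[|[|?]]] ?] //= _; ring.
Qed.

Lemma act_coord i w v : all (predC1 i) w -> coord i (act w v) = coord i v.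
Proof. by elim: w => [|j w IH] //= /andP [ji /IH <-]; exact: sref_coord. Qed.

Lemma bform_root_diag i : bform cm ck (simple_root i) (simple_root i) = 1.
Proof. by case: i => [[|[|[|?]]] ?] //=; ring. Qed.

Lemma bform_root (i j : 'I_3) : i != j ->
  bform cm ck (simple_root i) (simple_root j) = - cos (PI / INR (coxm k m i j)).
Proof.
case: i j => [[|[|[|?]]] ?] [[|[|[|?]]] ?] //= _;
by rewrite /coxm /= /cm /ck ?cos_PI2; ring.
Qed.

Lemma coxm_ge2 (i j : 'I_3) : i != j -> (2 <= coxm k m i j)%N.
Proof.
by move=> ij; rewrite /coxm (negbTE ij); case: ifP => // _; case: ifP => _; exact: ltnW.
Qed.

Lemma act_rel (i j : 'I_3) v : iter (coxm k m i j) (fun x => sref i (sref j x)) v = v.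
Proof.
have [<-|ij] := eqVneq i j; first by rewrite coxm_diag /= /sref reflectionK ?bform_root_diag.
exact: reflection_pair_order (coxm_ge2 ij) (bform_root_diag i) (bform_root_diag j) (bform_root ij) v.
Qed.

Lemma act_weq u w : weq k m u w -> forall v, act u v = act w v.
Proof.
elim=> {u w} [u|u w _ IH|u w x _ IH1 _ IH2|u w i j] v //; first by rewrite IH1 IH2.
rewrite !act_cat; congr act; rewrite -[RHS](act_rel i j).
by elim: (coxm k m i j) => [|n IH] //=; rewrite -IH.
Qed.

Let k_pos : (0 < k)%N := ltnW (ltnW k_ge3).

Definition th := PI / INR k.
Definition p0 := - cm / (1 - ck * ck).
Definition even_up (t : nat) : nat := if odd t then t.+1 else t.
Definition odd_up (t : nat) : nat := if odd t then t else t.+1.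

(* The vector (alt_word t) alpha_1, found by solving the Chebyshev recurrence
   cos ((x + 2) th) = 2 ck cos ((x + 1) th) - cos (x th) that the reflections
   s0 and s2 impose on its first and last coordinates. *)
Definition alt_root (t : nat) : vec :=
  (p0 * (cos (INR (even_up t) * th) - 1), 1, p0 * (cos (INR (odd_up t) * th) - ck)).

Lemma th_gt0 : 0 < th.
Proof. exact: PI_div_gt0 k_pos. Qed.

Lemma kth : INR k * th = PI.
Proof. by have := INR_gt0 k_pos; rewrite /th => ?; field; lra. Qed.

Lemma th_lt_PI : th < PI.
Proof. by have := @PI_div_le 3 k k_ge3; have := PI_RGT_0; rewrite /= -/th; lra. Qed.

Lemma one_sub_ck2_gt0 : 0 < 1 - ck * ck.
Proof.
have := sin2_cos2 th; have := sin_gt_0 _ th_gt0 th_lt_PI.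
rewrite /Rsqr /ck -/th => sin_pos sc; nra.
Qed.

Lemma cm_gt0 : 0 < cm.
Proof.
have := @PI_div_le 3 m m_ge3; have := PI_div_gt0 (ltnW (ltnW m_ge3)).
by have := PI_RGT_0; rewrite /= => *; apply: cos_gt_0; lra.
Qed.

Lemma p0_lt0 : p0 < 0.
Proof.
have := one_sub_ck2_gt0; have := cm_gt0 => cm_pos ck_pos.
have : 0 < / (1 - ck * ck) by apply: Rinv_0_lt_compat.
rewrite /p0 /Rdiv; nra.
Qed.

Lemma act_alt_word t : act (alt_word t) (simple_root s1) = alt_root t.
Proof.
have := one_sub_ck2_gt0 => ck_pos.
have cos_rec x : cos ((x + 2) * th) = 2 * ck * cos ((x + 1) * th) - cos (x * th).
  replace ((x + 2) * th) with ((x + 1) * th + th) by ring.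
  replace (x * th) with ((x + 1) * th - th) by ring.
  by rewrite cos_plus cos_minus /ck -/th; ring.
elim: t => [|t IH].
  rewrite /alt_root /even_up /odd_up /simple_root /= Rmult_0_l cos_0 Rmult_1_l /ck -/th.
  vec_ring.
have -> : act (alt_word t.+1) (simple_root s1) = sref (alt_letter t) (alt_root t).
  by rewrite /= IH.
rewrite /alt_root; have [t_odd|t_even] := boolP (odd t).
- have -> : even_up t = t.+1 by rewrite /even_up t_odd.
  have -> : odd_up t = t by rewrite /odd_up t_odd.
  have -> : even_up t.+1 = t.+1 by rewrite /even_up /= t_odd.
  have -> : odd_up t.+1 = t.+2 by rewrite /odd_up /= t_odd.
  rewrite !S_INR /alt_letter t_odd /sref /reflection /simple_root /=.
  replace (INR t + 1 + 1) with (INR t + 2) by ring; rewrite cos_rec; vec_ring.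
- have -> : even_up t = t by rewrite /even_up (negbTE t_even).
  have -> : odd_up t = t.+1 by rewrite /odd_up (negbTE t_even).
  have -> : even_up t.+1 = t.+2 by rewrite /even_up /= t_even.
  have -> : odd_up t.+1 = t.+1 by rewrite /odd_up /= t_even.
  rewrite !S_INR /alt_letter (negbTE t_even) /sref /reflection /simple_root /=.
  replace (INR t + 1 + 1) with (INR t + 2) by ring; rewrite cos_rec.
  f_equal; [f_equal|]; rewrite /p0; field; lra.
Qed.

Lemma ck_lt1 : ck < 1.
Proof.
have := th_gt0; have := th_lt_PI; rewrite /ck -/th -cos_0 => th_lt th_gt.
by apply: cos_decreasing_1; lra.
Qed.

Lemma cos_th_refl j : (j <= k.*2)%N -> cos (INR j * th) = cos (INR (k.*2 - j) * th).
Proof.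
move=> j_le; have : INR (k.*2 - j + j) = INR k.*2 by rewrite subnK.
have -> : INR k.*2 = 2 * INR k by rewrite -addnn plus_INR; ring.
rewrite plus_INR => e; have -> : INR (k.*2 - j) = 2 * INR k - INR j by lra.
rewrite Rmult_minus_distr_r Rmult_assoc kth.
by rewrite cos_minus cos_2PI sin_2PI; ring.
Qed.

Lemma cos_th_lt_ck_half j : (1 < j <= k)%N -> cos (INR j * th) < ck.
Proof.
case/andP=> j_gt1 j_le.
have j2 : 2 <= INR j by have := le_INR 2 j (ssrnat.leP j_gt1); rewrite /=; lra.
have jk : INR j <= INR k by apply: le_INR; apply/ssrnat.leP.
have := th_gt0; have := th_lt_PI; have := kth => kth th_lt th_gt.
by rewrite /ck -/th; apply: cos_decreasing_1; nra.
Qed.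

Lemma cos_th_lt_ck j : (1 < j < k.*2.-1)%N -> cos (INR j * th) < ck.
Proof.
move=> j_range; have [j_le|j_gt] := leqP j k; first by apply: cos_th_lt_ck_half; lia.
by rewrite cos_th_refl; [apply: cos_th_lt_ck_half | ]; lia.
Qed.

Lemma cos_th1 : cos (INR 1 * th) = ck.
Proof. by rewrite /= Rmult_1_l. Qed.

Lemma cos_th_pred : cos (INR k.*2.-1 * th) = ck.
Proof.
rewrite cos_th_refl; last by lia.
have -> : (k.*2 - k.*2.-1 = 1)%N by lia.
exact: cos_th1.
Qed.

Lemma cos_th_le_ck j : (0 < j < k.*2)%N -> cos (INR j * th) <= ck.
Proof.
move=> j_range; have [->|j_neq1] := eqVneq j 1%N; first by rewrite cos_th1; lra.
have [->|j_neq] := eqVneq j k.*2.-1; first by rewrite cos_th_pred; lra.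
by apply: Rlt_le; apply: cos_th_lt_ck; lia.
Qed.

Lemma cos_th_eq_ck j : (0 < j < k.*2)%N -> cos (INR j * th) = ck ->
  j = 1%N \/ j = k.*2.-1.
Proof.
move=> j_range cos_eq; have [|j_neq1] := eqVneq j 1%N; first by left.
have [|j_neq] := eqVneq j k.*2.-1; first by right.
have : cos (INR j * th) < ck by apply: cos_th_lt_ck; lia.
lra.
Qed.

Lemma cos_th_lt1 j : (0 < j < k.*2)%N -> cos (INR j * th) < 1.
Proof. by move/cos_th_le_ck; have := ck_lt1; lra. Qed.

Lemma cos_even_up_eq1 t : (t < k.*2)%N -> cos (INR (even_up t) * th) = 1 ->
  t = 0%N \/ t = k.*2.-1.
Proof.
rewrite /even_up => t_lt; case: ifP => _ cos1.
  have [t1_lt|t1_ge] := ltnP t.+1 k.*2; last by right; lia.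
  by exfalso; have := @cos_th_lt1 t.+1 ltac:(lia); lra.
have [|t_gt0] := posnP t; first by left.
by exfalso; have := @cos_th_lt1 t ltac:(lia); lra.
Qed.

Lemma odd_up_range t : (t < k.*2)%N -> (0 < odd_up t < k.*2)%N.
Proof.
rewrite /odd_up => t_lt; case t_odd: (odd t); first by case: t t_odd t_lt => // t' _ ->.
rewrite /= ltn_neqAle t_lt andbT; apply/eqP => /(congr1 odd).
by rewrite /= odd_double t_odd.
Qed.

Lemma cos_odd_up_eq_ck t : (t < k.*2)%N -> cos (INR (odd_up t) * th) = ck ->
  [\/ t = 0%N, t = 1%N, t = k.*2.-2 | t = k.*2.-1].
Proof.
move=> t_lt /(cos_th_eq_ck (odd_up_range t_lt)).
by rewrite /odd_up; case: ifP => _ [] odd_up_eq;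
  [constructor 2 | constructor 4 | constructor 1 | constructor 3]; lia.
Qed.

Lemma act_s1_root : act [:: s1] (simple_root s1) = vscal (-1) (simple_root s1).
Proof. rewrite /act /sref /reflection /simple_root /=; vec_ring. Qed.

Lemma dihedral_conj_s1 X Y : all (predC1 s1) X -> all (predC1 s1) Y ->
  weq k m (s1 :: X) (Y ++ [:: s1]) -> weq k m X [::] \/ weq k m X [:: s2].
Proof.
move=> X_s1 Y_s1 e.
have [t t_lt eX] := alt_word_normal m k_pos X_s1.
have := act_weq e (simple_root s1).
rewrite -cat1s !act_cat (act_weq eX) act_alt_word act_s1_root act_scal.
have := act_coord (simple_root s1) Y_s1.
move: (act Y (simple_root s1)) => [[y0 y1] y2].
rewrite /coord /sref /reflection /simple_root /alt_root /= => y1_eq /(f_equal (coord s1)).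
rewrite /coord /= => e1.
have cos1 : cos (INR (even_up t) * th) = 1.
  have : cm * p0 * (cos (INR (even_up t) * th) - 1) = 0 by lra.
  have := cm_gt0; have := p0_lt0 => p0_neg cm_pos.
  by case/Rmult_integral => [/Rmult_integral []|]; lra.
case: (cos_even_up_eq1 t_lt cos1) => t_eq; rewrite t_eq in eX; first by left.
by right; apply: weq_trans eX (alt_word_pred m k_pos).
Qed.

Lemma dihedral_coset_s1 g X Y : all (predC1 s2) g -> all (predC1 s1) X ->
  all (predC1 s1) Y -> weq k m (g ++ X) (Y ++ [:: s1]) ->
  [\/ weq k m X [::], weq k m X [:: s0], weq k m X [:: s0; s2] | weq k m X [:: s2]].
Proof.
move=> g_s2 X_s1 Y_s1 e.
have [t t_lt eX] := alt_word_normal m k_pos X_s1.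
have [t' t'_lt eY] := alt_word_normal m k_pos Y_s1.
have := act_weq e (simple_root s1).
rewrite !act_cat (act_weq eX) (act_weq eY) act_s1_root act_scal !act_alt_word.
move/(f_equal (coord s2)); rewrite act_coord // /alt_root /coord /= => e2.
have := cos_th_le_ck (odd_up_range t_lt); have := cos_th_le_ck (odd_up_range t'_lt).
have := p0_lt0 => p0_neg le' le.
have cos_eq : cos (INR (odd_up t) * th) = ck by nra.
case: (cos_odd_up_eq_ck t_lt cos_eq) => t_eq; rewrite t_eq in eX.
- by constructor 1.
- by constructor 2.
- by constructor 3; apply: weq_trans eX (alt_word_pred2 m k_pos).
- by constructor 4; apply: weq_trans eX (alt_word_pred m k_pos).
Qed.

End TitsRepresentation.

Local Close Scope R_scope.

(** * Pairs of s1-adjacent chambers *)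

Section Chambers.
Variables (k m : nat) (Ch : Type) (delta : Ch -> Ch -> word).
Hypotheses (hB : is_building k m delta) (k_ge3 : 3 <= k) (m_ge3 : 3 <= m).
Local Notation weq := (weq k m).
Local Notation samevert := (samevert k m delta).

Lemma weq_delta_rev C D f : weq (delta C D) f -> weq (delta D C) (rev f).
Proof. by move=> e; apply: weq_trans (delta_sym hB C D) (weq_rev e). Qed.

Lemma sadj_s1_in_residue E E' : samevert s0 E E' -> ~ samevert s1 E E' ->
  exists B, [/\ samevert s0 E B, samevert s1 E' B & sadj k m delta s1 E B].
Proof.
move=> EE' E_E'; have [g g_s0 e] := samevert_parabolic hB EE'.
case: (klein_normal k m g_s0) => /(weq_trans e) e'.
- by case: E_E'; exact: (parabolic_samevert hB (f := [::])).
- by exists E'; split; [| exact: rt_refl |].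
- by case: E_E'; exact: (parabolic_samevert hB (f := [:: s2])).
- have [B [BE' BE]] := delta_panel_step hB (weq_delta_rev e' : weq _ [:: s2; s1]).
  exists B; split.
  + by apply: (parabolic_samevert hB (f := [:: s1])) => //; exact: sadj_sym hB _ _ _ BE.
  + by apply: (samevert_sym hB); exact: (parabolic_samevert hB (f := [:: s2])).
  + exact: sadj_sym hB _ _ _ BE.
Qed.

Lemma delta_s1_cons A B D y : sadj k m delta s1 A B -> ~ samevert s1 A D ->
  all (predC1 s1) y -> weq (delta B D) y -> weq (delta A D) (s1 :: y).
Proof.
move=> AB A_D y_s1 BD; case: (delta_panel hB D AB) => e.
  exact: weq_trans e (weq_cons s1 BD).
by case: A_D; exact (parabolic_samevert hB y_s1 (weq_trans e BD)).
Qed.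

Lemma delta_rev_s1 A D y : weq (delta A D) (s1 :: y) ->
  weq (delta D A) (rev y ++ [:: s1]).
Proof. by move/weq_delta_rev; rewrite rev_cons cats1. Qed.

Lemma s1_panels_same_type2 A B C D :
  samevert s1 A C -> samevert s1 B D -> ~ samevert s1 A D ->
  sadj k m delta s1 A B -> sadj k m delta s1 C D -> samevert s0 A C.
Proof.
move=> AC BD A_D AB CD.
have [x x_s1 ex] := samevert_parabolic hB AC.
have [y y_s1 ey] := samevert_parabolic hB BD.
have CA : weq (delta C A) (rev x) := weq_delta_rev ex.
have rx_s1 : all (predC1 s1) (rev x) by rewrite all_rev.
have DA : weq (delta D A) (s1 :: rev x).
  by apply: delta_s1_cons (sadj_sym hB CD) _ rx_s1 CA; move/(samevert_sym hB).
have DA' := delta_rev_s1 (delta_s1_cons AB A_D y_s1 ey).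
have ry_s1 : all (predC1 s1) (rev y) by rewrite all_rev.
have := dihedral_conj_s1 k_ge3 m_ge3 rx_s1 ry_s1 (weq_trans (weq_sym DA) DA').
case=> e; apply: (samevert_sym hB).
- by apply: (parabolic_samevert hB (f := [::])) => //; exact: weq_trans CA e.
- by apply: (parabolic_samevert hB (f := [:: s2])) => //; exact: weq_trans CA e.
Qed.

Lemma s1_panel_typem_residue A B G H :
  samevert s1 A G -> samevert s1 B H -> samevert s2 G H -> ~ samevert s1 A H ->
  sadj k m delta s1 A B -> exists K, samevert s0 A K /\ samevert s2 K G.
Proof.
move=> AG BH GH A_H AB.
have [x x_s1 ex] := samevert_parabolic hB AG.
have [y y_s1 ey] := samevert_parabolic hB BH.
have [g g_s2 eg] := samevert_delta hB A (samevert_sym hB GH).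
have rx_s1 : all (predC1 s1) (rev x) by rewrite all_rev.
have ry_s1 : all (predC1 s1) (rev y) by rewrite all_rev.
have HA : weq (delta H A) (g ++ rev x) := weq_trans eg (weq_catl g (weq_delta_rev ex)).
have HA' := delta_rev_s1 (delta_s1_cons AB A_H y_s1 ey).
have split_x f1 f2 : all (predC1 s0) f1 -> all (predC1 s2) f2 ->
    weq (rev x) (rev (f1 ++ f2)) -> exists K, samevert s0 A K /\ samevert s2 K G.
  move=> f1_s0 f2_s2 /weq_rev; rewrite !revK => e.
  exact (parabolic_cat_samevert hB f1_s0 f2_s2 (weq_trans ex e)).
case: (dihedral_coset_s1 k_ge3 m_ge3 g_s2 rx_s1 ry_s1 (weq_trans (weq_sym HA) HA')).
- by apply: (split_x [::] [::]).
- by apply: (split_x [::] [:: s0]).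
- by apply: (split_x [:: s2] [:: s0]).
- by apply: (split_x [:: s2] [::]).
Qed.

End Chambers.

Section Vertices.
Variables (k m : nat) (Ch : Type) (delta : Ch -> Ch -> word).
Hypotheses (hB : is_building k m delta) (k_ge3 : 3 <= k) (m_ge3 : 3 <= m).
Local Notation samevert := (samevert k m delta).
Local Notation vadj := (vadj k m delta).

Definition panel_pair (v v' w A B : Ch) :=
  [/\ samevert s1 v A, samevert s1 v' B, samevert s0 w A & sadj k m delta s1 A B].

Lemma samevert_apart i v v' A B : ~ samevert i v v' ->
  samevert i v A -> samevert i v' B -> ~ samevert i A B.
Proof.
move=> vv' vA v'B AB; apply: vv'.
exact: samevert_trans vA (samevert_trans AB (samevert_sym hB v'B)).
Qed.

Lemma panel_pair_exists v v' w : ~ samevert s1 v v' ->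
  vadj s1 v s0 w -> vadj s1 v' s0 w -> exists A B, panel_pair v v' w A B.
Proof.
move=> vv' [_ [E [vE wE]]] [_ [E' [v'E' wE']]].
have EE' : samevert s0 E E' := samevert_trans (samevert_sym hB wE) wE'.
have [B [EB E'B EB1]] := sadj_s1_in_residue hB EE' (samevert_apart vv' vE v'E').
by exists E, B; split => //; exact: samevert_trans v'E' E'B.
Qed.

Lemma panel_pair_type2 v v' w w' A B C D : ~ samevert s1 v v' ->
  panel_pair v v' w A B -> panel_pair v v' w' C D -> samevert s0 w w'.
Proof.
move=> vv' [vA v'B wA AB] [vC v'D w'C CD].
have AC := s1_panels_same_type2 hB k_ge3 m_ge3 (samevert_trans (samevert_sym hB vA) vC)
  (samevert_trans (samevert_sym hB v'B) v'D) (samevert_apart vv' vA v'D) AB CD.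
exact: samevert_trans wA (samevert_trans AC (samevert_sym hB w'C)).
Qed.

Lemma panel_pair_typem v v' w u A B : ~ samevert s1 v v' -> panel_pair v v' w A B ->
  vadj s1 v s2 u -> vadj s1 v' s2 u -> vadj s0 w s2 u.
Proof.
move=> vv' [vA v'B wA AB] [_ [G [vG uG]]] [_ [H [v'H uH]]].
have [K [AK KG]] := s1_panel_typem_residue hB k_ge3 m_ge3
  (samevert_trans (samevert_sym hB vA) vG) (samevert_trans (samevert_sym hB v'B) v'H)
  (samevert_trans (samevert_sym hB uG) uH) (samevert_apart vv' vA v'H) AB.
split => //; exists K; split; first exact: samevert_trans wA AK.
exact: samevert_trans uG (samevert_sym hB KG).
Qed.

End Vertices.

Theorem corollary5p4 (k m : nat) (hk : 3 <= k) (hm : 6 <= m)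
  (Ch : Type) (delta : Ch -> Ch -> word)
  (hB : is_building k m delta) (hfin : finite_thickness k m delta)
  (v v' w : Ch) :
  ~ samevert k m delta typek v v' ->
  vadj k m delta typek v type2 w ->
  vadj k m delta typek v' type2 w ->
  (forall w' : Ch,
     vadj k m delta typek v type2 w' -> vadj k m delta typek v' type2 w' ->
     samevert k m delta type2 w w') /\
  (forall u : Ch,
     vadj k m delta typek v typem u -> vadj k m delta typek v' typem u ->
     vadj k m delta type2 w typem u).
Proof.
move=> vv' vw v'w; have m_ge3 : 3 <= m by exact: leq_trans hm.
have [A [B AB]] := panel_pair_exists hB vv' vw v'w.
split=> [w' vw' v'w' | u vu v'u].
- have [C [D CD]] := panel_pair_exists hB vv' vw' v'w'.
  exact (panel_pair_type2 hB hk m_ge3 vv' AB CD).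
- exact (panel_pair_typem hB hk m_ge3 vv' AB vu v'u).
Qed.
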